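(* Let $m\ge2$, $N\in\mathbb{N}$, let $\Omega\subset\mathbb{R}^m$ be a bounded open connected set, and let $\overline\Omega=\{(x_1,\ldots,x_N)\in\Omega^N: x_i\neq x_j \text{ for all } i\neq j\}$. Let $V_1,\ldots,V_d$ be smooth vector fields on $\mathbb{R}^m$ such that $\mathrm{Lie}(V_1,\ldots,V_d)$ interpolates at the tuple $\bar x=(x_1,\ldots,x_N)\in\overline\Omega$. Then \[ \mathrm{Lie}(V_1^{\oplus N},\ldots,V_d^{\oplus N})(\bar x)=(\mathbb{R}^m)^N, \] i.e. the vector fields $V_1^{\oplus N},\ldots,V_d^{\oplus N}$ on $(\mathbb{R}^m)^N$ satisfy the Hörmander condition at $\bar x$.
   Context: For smooth vector fields $U,V$ on $\mathbb{R}^n$, the Lie bracket is $[U,V](x)=DV(x)U(x)-DU(x)V(x)$, with $DU$ the Jacobian matrix. $\mathrm{Lie}(U_1,\ldots,U_d)$ is the smallest linear space of vector fields containing $U_1,\ldots,U_d$ and closed under Lie brackets, and $\mathrm{Lie}(U_1,\ldots,U_d)(x)=\{W(x): W\in\mathrm{Lie}(U_1,\ldots,U_d)\}\subseteq\mathbb{R}^n$. For a vector field $V$ on $\mathbb{R}^m$, $V^{\oplus N}$ is the vector field on $(\mathbb{R}^m)^N$ given by $V^{\oplus N}(x_1,\ldots,x_N)=(V(x_1),\ldots,V(x_N))$. A collection $\mathcal V$ of vector fields on $\mathbb{R}^m$ interpolates at a tuple $(x_1,\ldots,x_N)$ if for every $(v_1,\ldots,v_N)\in(\mathbb{R}^m)^N$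 there exists $\widehat V\in\mathcal V$ with $\widehat V(x_i)=v_i$ for all $i=1,\ldots,N$. *)

From HB Require Import structures.
From mathcomp Require Import all_boot all_order all_algebra.
From mathcomp Require Import all_classical all_reals all_analysis.
Set Implicit Arguments. Unset Strict Implicit. Unset Printing Implicit Defensive.
Import Order.TTheory GRing.Theory Num.Theory.
Import numFieldNormedType.Exports.
Local Open Scope classical_set_scope.
Local Open Scope ring_scope.

Section Defs.
Variable R : realType.

Fixpoint iterD {V W : normedModType R} (s : seq V) (f : V -> W) : V -> W :=
  match s with
  | [::] => f
  | v :: s' => fun x => 'D_v (iterD s' f) x
  end.

Definition smooth {V W : normedModType R} (f : V -> W) : Prop :=
  forall s : seq V, continuous (iterD s f) /\ (forall v x, derivable (iterD s f) x v).

Definition lie_bracket {V : normedModType R} (U W : V -> V) : V -> V :=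
  fun x => 'D_(U x) W x - 'D_(W x) U x.

Inductive Lie {V : normedModType R} {d : nat} (U : 'I_d -> V -> V) : (V -> V) -> Prop :=
| Lie_gen i : Lie U (U i)
| Lie_zero : Lie U (fun _ => 0)
| Lie_add W1 W2 : Lie U W1 -> Lie U W2 -> Lie U (fun x => W1 x + W2 x)
| Lie_scale (a : R) W : Lie U W -> Lie U (fun x => a *: W x)
| Lie_bracket W1 W2 : Lie U W1 -> Lie U W2 -> Lie U (lie_bracket W1 W2).

Definition Lie_at {V : normedModType R} {d : nat} (U : 'I_d -> V -> V) (x : V) : set V :=
  [set W x | W in Lie U].

(* (R^m)^N is represented as N x m matrices; row i is the i-th point.
   V^{(+)N}(x_1,...,x_N) = (V x_1, ..., V x_N). *)
Definition dsum {m : nat} (N : nat) (V : 'rV[R]_m -> 'rV[R]_m) :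
  'M[R]_(N, m) -> 'M[R]_(N, m) :=
  fun X => \matrix_(i < N) V (row i X).

Definition interpolates {m N : nat} (F : set ('rV[R]_m -> 'rV[R]_m)) (X : 'M[R]_(N, m)) : Prop :=
  forall Y : 'M[R]_(N, m), exists2 W, F W & forall i : 'I_N, W (row i X) = row i Y.

Definition config {m : nat} (N : nat) (Omega : set 'rV[R]_m) : set 'M[R]_(N, m) :=
  [set X | (forall i, Omega (row i X)) /\ (forall i j : 'I_N, i != j -> row i X != row j X)].

End Defs.
Arguments config {R m} N Omega.
Arguments dsum {R m} N V.
Arguments interpolates {R m N} F X.
Arguments Lie_at {R V d} U x.

From Pilot Require Import Defs.
From HB Require Import structures.
From mathcomp Require Import all_boot all_order all_algebra.
From mathcomp Require Import all_classical all_reals all_analysis.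
From mathcomp Require Import ring lra.
Import Order.TTheory GRing.Theory Num.Theory.
Import numFieldNormedType.Exports.
Local Open Scope classical_set_scope.
Local Open Scope ring_scope.

(* A field W in Lie(V_1, ..., V_d) satisfies W^{(+)N} in Lie(V_1^{(+)N}, ...,
   V_d^{(+)N}): the Jacobian of W^{(+)N} is block diagonal with blocks DW(x_i),
   so W |-> W^{(+)N} commutes with brackets of smooth fields.  As
   W^{(+)N}(x_1, ..., x_N) = (W x_1, ..., W x_N), interpolation gives every
   vector of (R^m)^N.
   The real work is that Lie(V) consists of smooth fields.  Smoothness only
   controls directional derivatives, so the mean value theorem is used to show
   that continuous directional derivatives are linear in the direction; then
   [U, W] = sum_j U_j d_j W - W_j d_j U is a combination of products of smooth
   functions. *)

Section DirectionalDerivative.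
Context {R : realType} {V : normedModType R}.
Implicit Types (g : V -> R) (x y u v w : V).

Lemma is_derive_eps g x u (L : R) :
  (forall e, 0 < e -> exists2 d, 0 < d & forall k : R, k != 0 -> `|k| < d ->
     `|g (x + k *: u) - g x - k * L| <= e * `|k|) ->
  is_derive x u g L.
Proof.
move=> H.
have cv : (fun k : R => k^-1 *: ((g \o shift x) (k *: u) - g x)) @ 0^' --> L.
  apply/cvgrPdist_le => e e0.
  have [d d0 Hd] := H e e0.
  near=> k.
  have k0 : k != 0 by near: k; exact: nbhs_dnbhs_neq.
  have kd : `|k| < d by near: k; exact: dnbhs0_lt.
  rewrite distrC /= [k *: u + x]addrC.
  have -> : k^-1 *: (g (x + k *: u) - g x) - L = k^-1 * (g (x + k *: u) - g x - k * L).
    by rewrite [_ *: _]/(_ * _) mulrBr mulrA mulVf ?mul1r.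
  rewrite normrM normfV ler_pdivrMl ?normr_gt0 // [`|k| * e]mulrC; exact: Hd.
by split; [apply/cvg_ex; exists L | exact: cvg_lim cv].
Unshelve. all: by end_near. Qed.

Lemma is_derive_line g y w (s : R) : derivable g (y + s *: w) w ->
  is_derive s 1 (fun s => g (y + s *: w)) ('D_w g (y + s *: w)).
Proof.
move=> dg.
have E : (fun h : R => h^-1 *: (((fun s => g (y + s *: w)) \o shift s) (h *: 1)
                               - g (y + s *: w)))
       = (fun h : R => h^-1 *: ((g \o shift (y + s *: w)) (h *: w) - g (y + s *: w))).
  by apply/funext => h /=; rewrite [_%:A]mulr1 scalerDl addrCA addrA.
by split; rewrite /derivable /derive E.
Qed.

Lemma mean_value_dir g y w (t : R) : (forall z, derivable g z w) ->
  exists2 c : R, `|c| <= `|t| & g (y + t *: w) - g y = t * 'D_w g (y + c *: w).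
Proof.
move=> dg.
have dline (s : R) : is_derive s 1 (fun s => g (y + s *: w)) ('D_w g (y + s *: w)).
  exact: is_derive_line.
have cline : continuous (fun s : R => g (y + s *: w)).
  by move=> s; apply/differentiable_continuous/derivable1_diffP; case: (dline s).
have mvt (a b : R) : a <= b -> exists2 c, c \in `[a, b] &
    g (y + b *: w) - g (y + a *: w) = 'D_w g (y + c *: w) * (b - a).
  by move=> ab; apply: MVT_segment ab (fun s _ => dline s) (continuous_subspaceT cline).
have [t0|t0] := leP 0 t.
- have [c + E] := mvt _ _ t0; rewrite in_itv /= => /andP[c0 ct].
  exists c; first by rewrite !ger0_norm // (le_trans c0).
  by rewrite scale0r addr0 subr0 mulrC in E.
- have [c + E] := mvt _ _ (ltW t0); rewrite in_itv /= => /andP[tc c0].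
  exists c; first by rewrite !ler0_norm ?lerN2 // ltW.
  by rewrite scale0r addr0 sub0r mulrN in E; rewrite -opprB E opprK mulrC.
Qed.

Lemma increment_bound g w x : (forall y, derivable g y w) -> continuous ('D_w g) ->
  forall e, 0 < e -> exists2 d, 0 < d & forall y (t : R), `|y - x| < d -> `|t| < d ->
   `|g (y + t *: w) - g y - t * 'D_w g x| <= e * `|t|.
Proof.
move=> dg cg e e0.
have /cvgrPdist_lt/(_ e e0)/nbhs_ballP[r r0 near_x] := cg x.
have w1 : 0 < 1 + `|w| by rewrite ltr_pwDl.
set d := r / (1 + `|w|).
have dr : d * (1 + `|w|) = r by rewrite divfK ?gt_eqF.
exists d => [|y t yx td]; first by rewrite divr_gt0.
have [c ct ->] := mean_value_dir g y w t dg.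
rewrite -mulrBr normrM mulrC ler_wpM2r // ltW // distrC.
apply: near_x; rewrite -ball_normE /= opprD addrA.
apply: le_lt_trans (ler_normB _ _) _; rewrite normrZ distrC.
have := ler_wpM2r (normr_ge0 w) (ltW (le_lt_trans ct td)); lra.
Qed.

Lemma deriveZ_dir g x a w : (forall y, derivable g y w) -> continuous ('D_w g) ->
  'D_(a *: w) g x = a * 'D_w g x.
Proof.
move=> dg cg; apply: derive_val; apply: is_derive_eps => e e0.
have [->|a0] := eqVneq a 0.
  exists 1 => // k _ _.
  by rewrite !scale0r scaler0 addr0 subrr mul0r mulr0 subr0 normr0 mulr_ge0 // ltW.
have a_gt0 : 0 < `|a| by rewrite normr_gt0.
have [d d0 Hd] := increment_bound g w x dg cg _ (divr_gt0 e0 a_gt0).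
exists (d / `|a|) => [|k _ kd]; first by rewrite divr_gt0.
have := Hd x (k * a); rewrite subrr normr0 normrM -ltr_pdivlMr // => /(_ d0 kd).
have -> : e / `|a| * (`|k| * `|a|) = e * `|k| by rewrite mulrA mulrAC divfK ?gt_eqF.
by rewrite scalerA mulrA.
Qed.

Lemma deriveD_dir g x v w :
  (forall y, derivable g y v) -> (forall y, derivable g y w) ->
  continuous ('D_v g) -> continuous ('D_w g) ->
  'D_(v + w) g x = 'D_v g x + 'D_w g x.
Proof.
move=> dv dw cv cw; apply: derive_val; apply: is_derive_eps => e e0.
have e2 : 0 < e / 2 by rewrite divr_gt0.
have [rv rv0 Hv] := increment_bound g v x dv cv _ e2.
have [rw rw0 Hw] := increment_bound g w x dw cw _ e2.
have v1 : 0 < 1 + `|v| by rewrite ltr_pwDl.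
exists (Num.min rv (rw / (1 + `|v|))) => [|k _]; first by rewrite lt_min rv0 divr_gt0.
rewrite lt_min ltr_pdivlMr // => /andP[kv kw].
have v0 := normr_ge0 v; have k0 := normr_ge0 k.
have kv_rw : `|k| * `|v| < rw by nra.
have k_rw : `|k| < rw by nra.
have := Hv x k; rewrite subrr normr0 => /(_ rv0 kv) Bv.
have := Hw (x + k *: v) k; rewrite addrC addKr normrZ => /(_ kv_rw k_rw) Bw.
rewrite scalerDr addrA mulrDr.
set P := g (x + k *: v + k *: w) - g (x + k *: v) - k * 'D_w g x in Bw.
set Q := g (x + k *: v) - g x - k * 'D_v g x in Bv.
have -> : g (x + k *: v + k *: w) - g x - (k * 'D_v g x + k * 'D_w g x) = P + Q.
  by rewrite /P /Q; ring.
by apply: le_trans (ler_normD _ _) _; rewrite (splitr e) mulrDl lerD.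
Qed.

End DirectionalDerivative.

Section Smooth.
Context {R : realType} {V W : normedModType R}.
Implicit Types f : V -> W.

Lemma iterD_rcons s v f : Defs.iterD s ('D_v f) = Defs.iterD (rcons s v) f.
Proof. by elim: s => //= u s ->. Qed.

Lemma smooth_derive f v : smooth f -> smooth ('D_v f).
Proof. by move=> sf s; rewrite iterD_rcons; exact: sf. Qed.

Lemma smooth_continuous f : smooth f -> continuous f.
Proof. by move=> sf; have [] := sf [::]. Qed.

Lemma smooth_derivable f x v : smooth f -> derivable f x v.
Proof. by move=> sf; have [_] := sf [::]; apply. Qed.

Lemma smooth_derive_closed (P : (V -> W) -> Prop) :
  (forall f, P f -> continuous f) -> (forall f x v, P f -> derivable f x v) ->
  (forall f v, P f -> P ('D_v f)) ->
  forall f, P f -> smooth f.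
Proof.
move=> Pc Pd PD f Pf s.
suff Ps : P (Defs.iterD s f) by split=> [|v x]; [exact: Pc | exact: Pd].
by elim: s => //= v s; exact: PD.
Qed.

Lemma smooth_cst (c : W) : smooth (cst c : V -> W).
Proof.
apply: (@smooth_derive_closed (fun f => exists c, f = cst c)); last by exists c.
- by move=> _ [c' ->]; exact: cst_continuous.
- by move=> _ x v [c' ->]; exact: derivable_cst.
- by move=> _ v [c' ->]; exists 0; apply/funext => x; exact: derive_cst.
Qed.

End Smooth.

Section SmoothMatrix.
Context {R : realType} {V : normedModType R} {a b : nat}.
Implicit Types (u : V -> R) (F G : V -> 'M[R]_(a, b)).

Lemma smooth_coord G i j : smooth G -> smooth (fun x => G x i j).
Proof.
move=> sG.
pose P (g : V -> R) := exists2 G : V -> 'M[R]_(a, b), smooth G & g = (fun x => G x i j).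
apply: (@smooth_derive_closed _ _ _ P); last by exists G.
- move=> _ [H sH ->] x.
  apply: (@continuous_comp _ _ _ H (fun M : 'M[R]_(a, b) => M i j)).
    exact: smooth_continuous.
  exact: coord_continuous.
- by move=> _ x v [H sH ->]; move/derivable_mxP: (smooth_derivable H x v sH); apply.
- move=> _ v [H sH ->]; exists ('D_v H); first exact: smooth_derive.
  by apply/funext => x; rewrite derive_mx ?mxE //; exact: smooth_derivable.
Qed.

Lemma is_derive_scale {u G x v} : derivable u x v -> derivable G x v ->
  is_derive x v (fun y => u y *: G y) ('D_v u x *: G x + u x *: 'D_v G x).
Proof.
move=> du dG.
have coordE i j : (fun y => (u y *: G y) i j) = u * (fun y => G y i j).
  by apply/funext => y; rewrite !mxE.
have dGij i j : derivable (fun y => G y i j) x v by move/derivable_mxP: dG; apply.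
have duG : derivable (fun y => u y *: G y) x v.
  by apply/derivable_mxP => i j; rewrite coordE; exact: derivableM.
split=> //; rewrite (derive_mx duG) (derive_mx dG); apply/matrixP => i j.
by rewrite !mxE coordE deriveM // addrC [G x i j *: _]mulrC.
Qed.

(* The product rule keeps this class closed under ['D_v]. *)
Inductive smooth_span : (V -> 'M[R]_(a, b)) -> Prop :=
| span_scale u G : smooth u -> smooth G -> smooth_span (fun x => u x *: G x)
| spanD F G : smooth_span F -> smooth_span G -> smooth_span (fun x => F x + G x)
| spanZ k F : smooth_span F -> smooth_span (fun x => k *: F x).

Lemma smooth_span_continuous F : smooth_span F -> continuous F.
Proof.
elim=> [u G su sG | F1 F2 _ cF1 _ cF2 | k F1 _ cF1] x.
- by apply: continuousZ; exact: smooth_continuous.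
- by apply: continuousD; [exact: cF1 | exact: cF2].
- by apply: continuousZl_tmp; exact: cF1.
Qed.

Lemma smooth_span_derivable F x v : smooth_span F -> derivable F x v.
Proof.
elim=> [u G su sG | F1 F2 _ dF1 _ dF2 | k F1 _ dF1].
- have := is_derive_scale (smooth_derivable u x v su) (smooth_derivable G x v sG).
  by case.
- exact: derivableD.
- exact: derivableZ.
Qed.

Lemma smooth_span_derive F v : smooth_span F -> smooth_span ('D_v F).
Proof.
elim=> [u G su sG | F1 F2 sF1 DF1 sF2 DF2 | k F1 sF1 DF1].
- have -> : 'D_v (fun x => u x *: G x) =
            (fun x => 'D_v u x *: G x + u x *: 'D_v G x).
    apply/funext => x.
    have := is_derive_scale (smooth_derivable u x v su) (smooth_derivable G x v sG).
    by case.
  exact: spanD (span_scale _ _ (smooth_derive u v su) sG)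
              (span_scale _ _ su (smooth_derive G v sG)).
- have -> : 'D_v (fun x => F1 x + F2 x) = (fun x => 'D_v F1 x + 'D_v F2 x).
    by apply/funext => x; apply: deriveD; exact: smooth_span_derivable.
  exact: spanD.
- have -> : 'D_v (fun x => k *: F1 x) = (fun x => k *: 'D_v F1 x).
    by apply/funext => x; apply: deriveZ; exact: smooth_span_derivable.
  exact: spanZ.
Qed.

Lemma smooth_span_smooth F : smooth_span F -> smooth F.
Proof.
apply: smooth_derive_closed => [|F' x v|F' v].
- exact: smooth_span_continuous.
- exact: smooth_span_derivable.
- exact: smooth_span_derive.
Qed.

Lemma smooth_spanW F : smooth F -> smooth_span F.
Proof.
move=> sF; have -> : F = fun x => (cst 1 : V -> R) x *: F x.
  by apply/funext => x; rewrite scale1r.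
exact: span_scale _ _ (smooth_cst (1 : R)) sF.
Qed.

Lemma smoothD F G : smooth F -> smooth G -> smooth (fun x => F x + G x).
Proof.
move=> sF sG; apply: smooth_span_smooth.
exact: spanD (smooth_spanW _ sF) (smooth_spanW _ sG).
Qed.

Lemma smoothZ k F : smooth F -> smooth (fun x => k *: F x).
Proof. by move=> sF; apply: smooth_span_smooth; exact: spanZ (smooth_spanW _ sF). Qed.

Lemma smoothB F G : smooth F -> smooth G -> smooth (fun x => F x - G x).
Proof.
move=> sF sG; have -> : (fun x => F x - G x) = (fun x => F x + (-1) *: G x).
  by apply/funext => x; rewrite scaleN1r.
exact: smoothD _ _ sF (smoothZ (-1) _ sG).
Qed.

Lemma smooth_scale u G : smooth u -> smooth G -> smooth (fun x => u x *: G x).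
Proof. by move=> su sG; apply: smooth_span_smooth; exact: span_scale. Qed.

Lemma smooth_sum n (F : 'I_n -> V -> 'M[R]_(a, b)) :
  (forall j, smooth (F j)) -> smooth (fun x => \sum_(j < n) F j x).
Proof.
elim: n F => [|n IH] F sF.
  have -> : (fun x => \sum_(j < 0) F j x) = cst 0 by apply/funext => x; rewrite big_ord0.
  exact: smooth_cst.
have -> : (fun x => \sum_(j < n.+1) F j x) =
          (fun x => F ord0 x + \sum_(j < n) F (lift ord0 j) x).
  by apply/funext => x; rewrite big_ord_recl.
exact: smoothD _ _ (sF _) (IH _ (fun j => sF _)).
Qed.

End SmoothMatrix.

Section RowDerivative.
Context {R : realType} {m : nat}.

Lemma derive_partialsE (g : 'rV[R]_m -> R) x v :
  (forall y w, derivable g y w) -> (forall w, continuous ('D_w g)) ->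
  'D_v g x = \sum_(j < m) v 0 j * 'D_(delta_mx 0 j) g x.
Proof.
move=> dg cg; rewrite {1}(matrix_sum_delta v) big_ord1.
elim/big_rec2: _ => [|j w D _ <-]; first exact: derive0.
rewrite (deriveD_dir _ x _ _ (dg^~ _) (dg^~ _) (cg _) (cg _)).
by rewrite (deriveZ_dir _ x _ _ (dg^~ _) (cg _)).
Qed.

Lemma mx_derive_partialsE n p (G : 'rV[R]_m -> 'M[R]_(n, p)) x v : smooth G ->
  'D_v G x = \sum_(j < m) v 0 j *: 'D_(delta_mx 0 j) G x.
Proof.
move=> sG; have dG y w := smooth_derivable G y w sG.
rewrite (derive_mx (dG x v)); apply/matrixP => i k.
have sGik := smooth_coord G i k sG.
rewrite mxE summxE (derive_partialsE _ _ _ (fun y w => smooth_derivable _ y w sGik)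
  (fun w => smooth_continuous _ (smooth_derive _ w sGik))).
by apply: eq_bigr => j _; rewrite !mxE (derive_mx (dG x _)) mxE.
Qed.

Lemma smooth_lie_bracket (U W : 'rV[R]_m -> 'rV[R]_m) :
  smooth U -> smooth W -> smooth (lie_bracket U W).
Proof.
move=> sU sW.
have -> : lie_bracket U W = fun x =>
    \sum_(j < m) U x 0 j *: 'D_(delta_mx 0 j) W x
  - \sum_(j < m) W x 0 j *: 'D_(delta_mx 0 j) U x.
  by apply/funext => x; rewrite /lie_bracket !mx_derive_partialsE.
have sterm (A B : 'rV[R]_m -> 'rV[R]_m) : smooth A -> smooth B ->
    smooth (fun x => \sum_(j < m) A x 0 j *: 'D_(delta_mx 0 j) B x).
  move=> sA sB; apply: smooth_sum => j.
  by apply: smooth_scale; [exact: smooth_coord | exact: smooth_derive].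
exact: smoothB _ _ (sterm _ _ sU sW) (sterm _ _ sW sU).
Qed.

Lemma Lie_smooth d (U : 'I_d -> 'rV[R]_m -> 'rV[R]_m) W :
  (forall i, smooth (U i)) -> Lie U W -> smooth W.
Proof.
move=> sU; elim=> [i | | W1 W2 _ sW1 _ sW2 | k W' _ sW' | W1 W2 _ sW1 _ sW2].
- exact: sU.
- exact: smooth_cst.
- exact: smoothD _ _ sW1 sW2.
- exact: smoothZ k _ sW'.
- exact: smooth_lie_bracket.
Qed.

End RowDerivative.

Section DirectSum.
Context {R : realType} {m N : nat}.
Implicit Types W : 'rV[R]_m -> 'rV[R]_m.

Lemma is_derive_dsum W (X v : 'M[R]_(N, m)) :
  (forall i, derivable W (row i X) (row i v)) ->
  is_derive X v (dsum N W) (\matrix_(i < N) 'D_(row i v) W (row i X)).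
Proof.
move=> dW.
have quotE i j :
    (fun h : R => h^-1 *: (((fun Y => dsum N W Y i j) \o shift X) (h *: v)
                           - dsum N W X i j)) =
    (fun h : R => h^-1 *: (((fun y => W y 0 j) \o shift (row i X)) (h *: row i v)
                           - W (row i X) 0 j)).
  apply/funext => h /=; rewrite !mxE.
  by congr (_ *: (W _ 0 j - _)); apply/rowP => k; rewrite !mxE.
have dWij i j : derivable (fun Y => dsum N W Y i j) X v.
  by rewrite /derivable quotE; move/derivable_mxP: (dW i); apply.
have dD : derivable (dsum N W) X v by apply/derivable_mxP.
split=> //; rewrite (derive_mx dD); apply/matrixP => i j.
by rewrite !mxE (derive_mx (dW i)) mxE /derive quotE.
Qed.

Lemma lie_bracket_dsum W1 W2 :
  (forall y w, derivable W1 y w) -> (forall y w, derivable W2 y w) ->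
  lie_bracket (dsum N W1) (dsum N W2) = dsum N (lie_bracket W1 W2).
Proof.
move=> dW1 dW2; apply/funext => X; apply/matrixP => i j; rewrite /lie_bracket.
have [_ ->] := is_derive_dsum W2 X (dsum N W1 X) (fun i => dW2 _ _).
have [_ ->] := is_derive_dsum W1 X (dsum N W2 X) (fun i => dW1 _ _).
by rewrite !mxE !rowK.
Qed.

Lemma Lie_dsum d (U : 'I_d -> 'rV[R]_m -> 'rV[R]_m) W :
  (forall i, smooth (U i)) -> Lie U W -> Lie (fun i => dsum N (U i)) (dsum N W).
Proof.
move=> sU; elim=> [i | | W1 W2 _ L1 _ L2 | k W' _ L | W1 W2 LW1 L1 LW2 L2].
- exact: Lie_gen.
- have -> : dsum N (fun _ : 'rV[R]_m => 0) = fun _ : 'M[R]_(N, m) => 0.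
    by apply/funext => X; apply/matrixP => i j; rewrite !mxE.
  exact: Lie_zero.
- have -> : dsum N (fun x => W1 x + W2 x) = fun X => dsum N W1 X + dsum N W2 X.
    by apply/funext => X; apply/matrixP => i j; rewrite !mxE.
  exact: Lie_add.
- have -> : dsum N (fun x => k *: W' x) = fun X => k *: dsum N W' X.
    by apply/funext => X; apply/matrixP => i j; rewrite !mxE.
  exact: Lie_scale.
- have dLie W0 : Lie U W0 -> forall y w, derivable W0 y w.
    by move=> LW0 y w; apply: smooth_derivable; exact: Lie_smooth LW0.
  by rewrite -lie_bracket_dsum; [exact: Lie_bracket | exact: dLie | exact: dLie].
Qed.

End DirectSum.

Theorem lemma1 (R : realType) (m N d : nat) (Omega : set 'rV[R]_m)
  (V : 'I_d -> 'rV[R]_m -> 'rV[R]_m) (X : 'M[R]_(N, m)) :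
  (2 <= m)%N ->
  bounded_set Omega -> open Omega -> connected Omega ->
  (forall i, smooth (V i)) ->
  config N Omega X ->
  interpolates (Lie V) X ->
  Lie_at (fun i => dsum N (V i)) X = setT.
Proof.
move=> _ _ _ _ sV _ interpV; apply/seteqP; split=> // Y _.
have [W LW WY] := interpV Y.
exists (dsum N W); first exact: Lie_dsum.
by apply/row_matrixP => i; rewrite rowK WY.
Qed.
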